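(* Let $G$ be a finite simple graph of order $n(G)$ that is neither edgeless nor complete, and let $\overline{G}$ be its complement. Then ${\rm vs}_{\chi}(G) + {\rm vs}_{\chi}(\overline{G}) \leq n(G) + 1$.
   Context: The chromatic vertex stability number ${\rm vs}_{\chi}(G)$ of a graph $G$ with at least one edge is the minimum number of vertices of $G$ whose deletion results in a graph $H$ with $\chi(H) = \chi(G)-1$, where $\chi$ denotes the chromatic number. *)

From mathcomp Require Import all_boot.
Set Implicit Arguments. Unset Strict Implicit. Unset Printing Implicit Defensive.

Definition simple_graph (T : finType) (e : rel T) : Prop :=
  symmetric e /\ irreflexive e.

Definition compl_rel (T : finType) (e : rel T) : rel T :=
  fun x y => (x != y) && ~~ e x y.

Definition has_edge (T : finType) (e : rel T) : bool := [exists x, exists y, e x y].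
Definition is_complete (T : finType) (e : rel T) : bool :=
  [forall x, forall y, (x != y) ==> e x y].

(* Colours are taken in 'I_(#|T|.+1), which loses no generality since any
   graph on at most #|T| vertices is coloured with at most #|T| colours. *)
Definition colorable (T : finType) (e : rel T) (S : {set T}) (k : nat) : bool :=
  [exists f : {ffun T -> 'I_(#|T|.+1)},
     [forall x in S, f x < k] &&
     [forall x in S, forall y in S, e x y ==> (f x != f y)]].

(* chromatic number of the subgraph induced by S: least k with a proper
   k-colouring (for simple graphs such k <= #|T| always exists). *)
Definition chi (T : finType) (e : rel T) (S : {set T}) : nat :=
  find (colorable e S) (iota 0 #|T|.+2).

Definition vs_chi (T : finType) (e : rel T) : nat :=
  find (fun m => [exists D : {set T},
          (#|D| == m) && (chi e (~: D) == (chi e setT).-1)])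
       (iota 0 #|T|.+2).

From mathcomp Require Import all_boot.
From mathcomp Require Import zify.
Set Implicit Arguments. Unset Strict Implicit. Unset Printing Implicit Defensive.

(* Every graph G with an edge has vs_chi(G) <= n(G)/2: in an optimal colouring
   there are at least two colour classes, and deleting the smaller of two of
   them lowers the chromatic number by exactly one (the deleted class is
   independent, so chi drops by at most one, and the last colour can be moved
   into the freed one, so it does drop).  Applied to G and to its complement,
   which both have an edge, this gives vs_chi(G) + vs_chi(compl G) <= n(G). *)

Lemma find_iota_leq (P : pred nat) n m : m < n -> P m -> find P (iota 0 n) <= m.
Proof.
move=> lt_mn Pm; rewrite leqNgt; apply/negP => /(before_find 0).
by rewrite nth_iota // Pm.
Qed.

Lemma eq_ordE n (i j : 'I_n) : (i == j) = (i == j :> nat).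
Proof. by []. Qed.

Section Colouring.
Variables (T : finType) (e : rel T).

Lemma colorableP (S : {set T}) k :
  reflect (exists f : {ffun T -> 'I_(#|T|.+1)},
             {in S, forall x, f x < k} /\ {in S &, forall x y, e x y -> f x != f y})
          (colorable e S k).
Proof.
apply: (iffP existsP) => [[f /andP[/forall_inP f_lt /forall_inP f_prop]] | [f [f_lt f_prop]]].
  exists f; split=> // x y xS yS.
  by have /forall_inP/(_ y yS)/implyP := f_prop x xS.
exists f; apply/andP; split; apply/forall_inP => // x xS.
by apply/forall_inP => y yS; apply/implyP; apply: f_prop.
Qed.

Lemma colorable_leq (S : {set T}) k m : k <= m -> colorable e S k -> colorable e S m.
Proof.
move=> le_km /colorableP[f [f_lt f_prop]]; apply/colorableP; exists f; split=> //.
by move=> x xS; apply: leq_trans (f_lt x xS) le_km.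
Qed.

Lemma edge_not_colorable1 (S : {set T}) x y :
  x \in S -> y \in S -> e x y -> ~~ colorable e S 1.
Proof.
move=> xS yS exy; apply/colorableP => -[f [f_lt f_prop]].
have := f_prop x y xS yS exy; have := f_lt x xS; have := f_lt y yS.
by rewrite eq_ordE; lia.
Qed.

Lemma vs_chi_leq (D : {set T}) : chi e (~: D) = (chi e setT).-1 -> vs_chi e <= #|D|.
Proof.
move=> chiD; apply: find_iota_leq; first exact: leq_trans (max_card D) _.
by apply/existsP; exists D; rewrite eqxx chiD eqxx.
Qed.

Hypothesis e_irr : irreflexive e.

Lemma colorable_card (S : {set T}) : colorable e S #|T|.
Proof.
apply/colorableP; exists [ffun x => widen_ord (leqnSn _) (enum_rank x)].
split=> [x _ | x y _ _ exy]; rewrite !ffunE /=; first exact: ltn_ord.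
apply: contraTneq exy => /(congr1 val) /= /val_inj /enum_rank_inj ->.
by rewrite e_irr.
Qed.

Lemma chi_leq (S : {set T}) k : colorable e S k -> chi e S <= k.
Proof.
have chi_card : chi e S <= #|T| by apply: find_iota_leq => //; apply: colorable_card.
move=> Sk; have [lt_k | ge_k] := ltnP k #|T|.+2; first exact: find_iota_leq.
by apply: leq_trans chi_card _; lia.
Qed.

Lemma chi_leq_card (S : {set T}) : chi e S <= #|T|.
Proof. exact/chi_leq/colorable_card. Qed.

Lemma colorable_chi (S : {set T}) : colorable e S (chi e S).
Proof.
have has_col : has (colorable e S) (iota 0 #|T|.+2).
  by apply/hasP; exists #|T|; [rewrite mem_iota; lia | apply: colorable_card].
have lt_chi : chi e S < #|T|.+2 by have := chi_leq_card S; lia.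
by have := nth_find 0 has_col; rewrite nth_iota.
Qed.

Lemma chi_leq_setC_indep (A : {set T}) :
  {in A &, forall x y, ~~ e x y} -> chi e setT <= (chi e (~: A)).+1.
Proof.
move=> A_indep; set k := chi e (~: A).
have lt_k : k < #|T|.+1 by have := chi_leq_card (~: A); rewrite -/k.
have /colorableP[g [g_lt g_prop]] := colorable_chi (~: A).
apply: chi_leq; apply/colorableP.
exists [ffun x => if x \in A then inord k else g x].
split=> [x _ | x y _ _ exy]; rewrite !ffunE.
  case: ifPn => xA; first by rewrite inordK.
  by apply: ltnW; apply: g_lt; rewrite inE.
case: ifPn => xA; case: ifPn => yA.
- by rewrite (negPf (A_indep x y xA yA)) in exy.
- have := g_lt y; rewrite inE yA => /(_ isT).
  by rewrite eq_ordE inordK //; lia.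
- have := g_lt x; rewrite inE xA => /(_ isT).
  by rewrite eq_ordE inordK //; lia.
- by apply: g_prop; rewrite ?inE.
Qed.

Section OptimalColouring.
Variable f : {ffun T -> 'I_(#|T|.+1)}.
Hypothesis f_lt : forall x, f x < chi e setT.
Hypothesis f_prop : forall x y, e x y -> f x != f y.

Definition color_class (i : 'I_(#|T|.+1)) : {set T} := [set x | f x == i].

(* Recolour the vertices of the last colour [chi - 1] with the deleted colour [i]. *)
Lemma chi_setC_color_class_leq (i : 'I_(#|T|.+1)) :
  i < chi e setT -> chi e (~: color_class i) <= (chi e setT).-1.
Proof.
move=> lt_i; apply: chi_leq; apply/colorableP.
exists [ffun x => if f x == (chi e setT).-1 :> nat then i else f x].
split=> [x | x y xC yC exy]; rewrite !ffunE.
  rewrite !inE => fxi; have := f_lt x.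
  by case: eqP; move: fxi; rewrite eq_ordE; lia.
move: xC yC; rewrite !inE; have := f_prop exy.
by case: ifP => /eqP fx; case: ifP => /eqP fy; rewrite !eq_ordE; lia.
Qed.

Lemma chi_setC_color_class (i : 'I_(#|T|.+1)) :
  i < chi e setT -> chi e (~: color_class i) = (chi e setT).-1.
Proof.
move=> lt_i; apply/eqP; rewrite eqn_leq chi_setC_color_class_leq //=.
suff : chi e setT <= (chi e (~: color_class i)).+1 by lia.
apply: chi_leq_setC_indep => x y; rewrite !inE => /eqP fx /eqP fy.
by apply/negP => /f_prop; rewrite fx fy eqxx.
Qed.

Lemma vs_chi_leq_color_class (i : 'I_(#|T|.+1)) :
  i < chi e setT -> vs_chi e <= #|color_class i|.
Proof. by move=> lt_i; apply/vs_chi_leq/chi_setC_color_class. Qed.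

End OptimalColouring.

Lemma chi_gt1 : has_edge e -> 1 < chi e setT.
Proof.
move=> /existsP[x /existsP[y exy]]; rewrite ltnNge.
apply: contraNN (edge_not_colorable1 (in_setT x) (in_setT y) exy) => chi_le1.
exact: colorable_leq chi_le1 (colorable_chi setT).
Qed.

Lemma vs_chi_half : has_edge e -> 2 * vs_chi e <= #|T|.
Proof.
move=> e_edge; have chi_gt1 := chi_gt1 e_edge.
have /colorableP[f [f_lt f_prop]] := colorable_chi setT.
have lt1_T : 1 < #|T|.+1 by have := chi_leq_card setT; lia.
have vs_C i : i < 2 -> vs_chi e <= #|color_class f (inord i)|.
  move=> lt_i2; apply: vs_chi_leq_color_class => [x | x y exy | ].
  - exact: f_lt.
  - exact: f_prop.
  - by rewrite inordK; lia.
pose C0 := color_class f (inord 0); pose C1 := color_class f (inord 1).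
have disj_C : [disjoint C0 & C1].
  apply/pred0P => x; rewrite /= !inE.
  by apply/andP => -[/eqP->]; rewrite eq_ordE !inordK.
have card_C01 : #|C0 :|: C1| = #|C0| + #|C1|.
  by apply/eqP; have [_ ->] := leq_card_setU C0 C1.
have vs_C0 : vs_chi e <= #|C0| := vs_C 0 isT.
have vs_C1 : vs_chi e <= #|C1| := vs_C 1 isT.
have := max_card (C0 :|: C1); lia.
Qed.

End Colouring.

Lemma irreflexive_compl_rel (T : finType) (e : rel T) : irreflexive (compl_rel e).
Proof. by move=> x; rewrite /compl_rel eqxx. Qed.

Lemma has_edge_compl_rel (T : finType) (e : rel T) :
  ~~ is_complete e -> has_edge (compl_rel e).
Proof.
rewrite negb_forall => /existsP[x]; rewrite negb_forall => /existsP[y].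
by rewrite negb_imply => xy; apply/existsP; exists x; apply/existsP; exists y.
Qed.

Theorem proposition5 (T : finType) (e : rel T) :
  simple_graph e -> has_edge e -> ~~ is_complete e ->
  vs_chi e + vs_chi (compl_rel e) <= #|T| + 1.
Proof.
move=> [_ e_irr] e_edge e_not_complete.
have := vs_chi_half e_irr e_edge.
have := vs_chi_half (irreflexive_compl_rel e) (has_edge_compl_rel e_not_complete).
lia.
Qed.
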